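(* Every graph $G$ with $n\geq 3$ vertices that has no $K_5$-minor satisfies $c(G)\leq 8(n-2)$.
   Context: All graphs are finite, simple and undirected. A graph $H$ is a minor of $G$ if $H$ can be obtained from a subgraph of $G$ by contracting edges. A clique of a graph $G$ is a (possibly empty) set of pairwise adjacent vertices; $c(G)$ denotes the number of cliques of $G$ (including the empty clique, all single vertices and all edges). *)

From mathcomp Require Import all_boot.
Set Implicit Arguments. Unset Strict Implicit. Unset Printing Implicit Defensive.

Definition simple_graph (T : finType) (e : rel T) : Prop :=
  symmetric e /\ irreflexive e.

Definition is_clique (T : finType) (e : rel T) (A : {set T}) : bool :=
  [forall x in A, forall y in A, (x != y) ==> e x y].

(* c(G): number of cliques, including the empty clique. *)
Definition num_cliques (T : finType) (e : rel T) : nat :=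
  #|[set A : {set T} | is_clique e A]|.

(* B induces a connected subgraph of G (B nonempty is required separately). *)
Definition connected_in (T : finType) (e : rel T) (B : {set T}) : bool :=
  [forall x in B, forall y in B,
     connect (fun u v => [&& e u v, u \in B & v \in B]) x y].

(* This is the standard equivalent of "obtained from a subgraph by
   contracting edges". *)
Definition is_minor (U : finType) (f : rel U) (T : finType) (e : rel T) : Prop :=
  exists phi : U -> {set T},
    [/\ forall u, phi u != set0,
        forall u, connected_in e (phi u),
        forall u v, u != v -> [disjoint phi u & phi v] &
        forall u v, f u v -> exists x, exists y, [/\ x \in phi u, y \in phi v & e x y]].

Definition complete_rel (n : nat) : rel 'I_n := fun i j => i != j.

Definition has_K5_minor (T : finType) (e : rel T) : Prop :=
  is_minor (@complete_rel 5) e.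

From mathcomp Require Import all_boot zify.
Set Implicit Arguments. Unset Strict Implicit. Unset Printing Implicit Defensive.

(* A K5-minor-free graph on n vertices has
   at most 3n - 6 edges, hence a vertex v of degree at most 5. If v is isolated it
   lies in a single clique. Otherwise the neighbourhood N(v) is K4-minor-free (with
   v it would give a K5 minor), and a K4-minor-free graph on h <= 5 vertices has at
   most 2h - 3 < 3h/2 edges, so some neighbour w of v has at most two common
   neighbours with v. Contracting vw then costs at most 8 cliques: those through w
   whose other vertices are v or common neighbours of v and w; any other clique
   through w, with w replaced by v, is a clique of G/vw that is not one of G.
   The bounds n - 1, 2n - 3 and 3n - 6 on the number of edges of K3-, K4- and
   K5-minor-free graphs come from the same contraction of an edge lying in few
   triangles; edges are counted through degree sums. *)

Section Graphs.
Variable T : finType.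
Implicit Types (e : rel T) (A B V : {set T}).

Definition nbhd e V x := [set y in V | e x y].
Definition deg e V x := #|nbhd e V x|.
Definition degsum e V := \sum_(x in V) deg e V x.
Definition codeg e V v w := #|nbhd e V v :&: nbhd e V w|.
Definition cliques e V := [set A : {set T} | (A \subset V) && is_clique e A].

(* The contraction G/vw of the graph (V, e), living on the vertex set [V :\ w]. *)
Definition contract e v w : rel T := fun x y =>
  (x != y) && [|| e x y, (x == v) && e w y | (y == v) && e x w].

Definition del_edge e a b : rel T := fun x y =>
  e x y && ~~ (((x == a) && (y == b)) || ((x == b) && (y == a))).

Definition has_K_minor k V e := exists phi : 'I_k -> {set T},
  [/\ forall i, phi i != set0, forall i, phi i \subset V,
      forall i, connected_in e (phi i),
      forall i j, i != j -> [disjoint phi i & phi j] &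
      forall i j, i != j -> exists x y, [/\ x \in phi i, y \in phi j & e x y]].

Lemma connected_inP e B :
  reflect (forall x y, x \in B -> y \in B ->
             connect (fun u v => [&& e u v, u \in B & v \in B]) x y)
          (connected_in e B).
Proof.
apply: (iffP forall_inP) => [h x y xB yB|h x xB].
  exact: (forall_inP (h x xB)).
by apply/forall_inP=> y yB; apply: h.
Qed.

Lemma connected_in_set1 e x : connected_in e [set x].
Proof. by apply/connected_inP=> y z; rewrite !inE => /eqP-> /eqP->. Qed.

Lemma connected_in_subrel e e' B :
  subrel e e' -> connected_in e B -> connected_in e' B.
Proof.
move=> ee' /connected_inP cB; apply/connected_inP=> x y xB yB.
apply: connect_sub (cB x y xB yB) => a b /and3P[eab aB bB].
by apply: connect1; rewrite /= aB bB (ee' _ _ eab).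
Qed.

Lemma has_K_minor_subset k V V' e :
  V \subset V' -> has_K_minor k V e -> has_K_minor k V' e.
Proof.
move=> sVV' [phi [ne sub con dis adj]]; exists phi; split=> // i.
exact: subset_trans (sub i) sVV'.
Qed.

Lemma has_K_minor_subrel k V e e' :
  subrel e e' -> has_K_minor k V e -> has_K_minor k V e'.
Proof.
move=> ee' [phi [ne sub con dis adj]]; exists phi; split=> //.
  by move=> i; apply: connected_in_subrel (con i).
by move=> i j ij; have [x [y [xi yj exy]]] := adj i j ij; exists x, y; rewrite ee'.
Qed.

Lemma has_K1_minor V e x : x \in V -> has_K_minor 1 V e.
Proof.
move=> xV; exists (fun=> [set x]); split=> [i|i|i|i j|i j]; rewrite ?ord1 //.
- by apply/set0Pn; exists x; rewrite set11.
- by rewrite sub1set.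
- exact: connected_in_set1.
Qed.

Lemma has_K_minor_cone k V e v : simple_graph e -> v \in V ->
  has_K_minor k (nbhd e V v) e -> has_K_minor k.+1 V e.
Proof.
move=> [sym irr] vV [phi [ne sub con dis adj]].
have subV j : phi j \subset V.
  by apply: subset_trans (sub j) _; apply/subsetP=> x; rewrite inE => /andP[].
have adjv j x : x \in phi j -> e v x.
  by move=> /(subsetP (sub j)); rewrite inE => /andP[].
have vphi j : v \notin phi j by apply/negP=> /adjv; rewrite irr.
pose psi i := if unlift ord0 i is Some j then phi j else [set v].
exists psi; split=> [i|i|i|i i'|i i']; rewrite /psi.
- case: unliftP => [j _|_]; first exact: ne.
  by apply/set0Pn; exists v; rewrite set11.
- by case: unliftP => [j _|_]; rewrite ?subV ?sub1set.
- by case: unliftP => [j _|_]; rewrite ?con ?connected_in_set1.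
- case: unliftP => [j ->|->]; case: unliftP => [j' ->|->] // ne_ii'.
  + by apply: dis; apply: contraNneq ne_ii' => ->.
  + by rewrite disjoint_sym disjoints1.
  + by rewrite disjoints1.
- case: unliftP => [j ->|->]; case: unliftP => [j' ->|->] // ne_ii'.
  + by apply: adj; apply: contraNneq ne_ii' => ->.
  + have /set0Pn[x xj] := ne j.
    by exists x, v; rewrite set11 xj sym (adjv j x xj).
  + have /set0Pn[x xj'] := ne j'.
    by exists v, x; rewrite set11 xj' (adjv j' x xj').
Qed.

Lemma nbhd_nbhd e V v w : nbhd e (nbhd e V v) w = nbhd e V v :&: nbhd e V w.
Proof. by apply/setP=> y; rewrite !inE; case: (y \in V); case: (e v y). Qed.

Lemma deg_nbhd e V v w : deg e (nbhd e V v) w = codeg e V v w.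
Proof. by rewrite /deg nbhd_nbhd. Qed.

Lemma has_K3_minor_triangle e V v w : simple_graph e -> v \in V -> w \in V ->
  e v w -> 0 < codeg e V v w -> has_K_minor 3 V e.
Proof.
move=> se vV wV evw /card_gt0P[c cC].
apply: (has_K_minor_cone se vV); apply: (has_K_minor_cone (v := w) se).
  by rewrite inE wV evw.
by rewrite -nbhd_nbhd in cC; apply: has_K1_minor cC.
Qed.

Lemma sum_mem_card A B : \sum_(x in A) (x \in B) = #|A :&: B|.
Proof.
rewrite -sum1_card big_mkcond [RHS]big_mkcond; apply: eq_bigr => x _.
by rewrite inE; case: (x \in A); case: (x \in B).
Qed.

Lemma deg_lt_card e V x : irreflexive e -> x \in V -> deg e V x < #|V|.
Proof.
move=> irr xV; apply: proper_card; apply/properP; split.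
  by apply/subsetP=> y; rewrite inE => /andP[].
by exists x; rewrite // inE irr andbF.
Qed.

Lemma degsum_le e V : irreflexive e -> degsum e V <= #|V| * #|V|.-1.
Proof.
move=> irr; rewrite /degsum -sum_nat_const; apply: leq_sum => x xV.
by have := deg_lt_card irr xV; lia.
Qed.

Lemma degsum_ge e V k :
  (forall x, x \in V -> k <= deg e V x) -> k * #|V| <= degsum e V.
Proof. by move=> kV; rewrite mulnC -sum_nat_const; apply: leq_sum. Qed.

Lemma exists_deg_lt e V k :
  degsum e V < k * #|V| -> exists2 x, x \in V & deg e V x < k.
Proof.
move=> lt_k; apply/exists_inP; apply: contraLR lt_k => /exists_inPn lo.
by rewrite -leqNgt degsum_ge // => x /lo; rewrite -leqNgt.
Qed.

Lemma degsum_gt0 e V :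
  0 < degsum e V -> exists x y, [/\ x \in V, y \in V & e x y].
Proof.
have [x /andP[xV /card_gt0P[y]]|none] := pickP [pred x in V | 0 < deg e V x].
  by rewrite inE => /andP[yV exy] _; exists x, y.
rewrite /degsum big1 // => x xV; apply/eqP; rewrite -leqn0 leqNgt.
by move: (none x); rewrite /= xV => /negbT.
Qed.

Lemma deg_setD1 e V v x : deg e V x = deg e (V :\ v) x + (v \in nbhd e V x).
Proof.
rewrite /deg (cardsD1 v) addnC; congr (_ + _).
by apply: eq_card => y; rewrite !inE andbA.
Qed.

Lemma degsum_setD1 e V v : simple_graph e -> v \in V ->
  degsum e V = degsum e (V :\ v) + 2 * deg e V v.
Proof.
move=> [sym irr] vV; rewrite /degsum (big_setD1 v vV) /=.
under eq_bigr => x _ do rewrite (deg_setD1 _ _ v).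
rewrite big_split /=.
have -> : \sum_(x in V :\ v) (v \in nbhd e V x) =
          \sum_(x in V :\ v) (x \in nbhd e V v).
  by apply: eq_bigr => x; rewrite !inE => /andP[_ xV]; rewrite vV xV sym.
have NvV : nbhd e V v \subset V :\ v.
  by apply/subsetP=> y; rewrite !inE => /andP[-> evy]; case: eqP evy => // ->; rewrite irr.
by rewrite sum_mem_card (setIidPr NvV) /deg; lia.
Qed.

Lemma cliqueP e A :
  reflect (forall x y, x \in A -> y \in A -> x != y -> e x y) (is_clique e A).
Proof.
apply: (iffP forall_inP) => [cA x y xA yA|cA x xA].
  by move/forall_inP/(_ y yA)/implyP: (cA x xA).
by apply/forall_inP=> y yA; apply/implyP; apply: cA.
Qed.

Lemma card_cliques_le e V : #|cliques e V| <= 2 ^ #|V|.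
Proof.
rewrite -card_powerset; apply: subset_leq_card; apply/subsetP=> A.
by rewrite !inE => /andP[].
Qed.

Lemma card_pointed_sets_le x (S : {set T}) :
  #|[set A : {set T} | (x \in A) && (A :\ x \subset S)]| <= 2 ^ #|S|.
Proof.
rewrite -card_powerset.
have injD : {in [set A : {set T} | (x \in A) && (A :\ x \subset S)] &,
             injective (fun A => A :\ x)}.
  move=> A B /[!inE] /andP[xA _] /andP[xB _] /= eqAB.
  by rewrite -(setD1K xA) eqAB setD1K.
rewrite -(card_in_imset injD); apply: subset_leq_card; apply/subsetP=> B /imsetP[A].
by rewrite !inE => /andP[_ sAS] ->.
Qed.

Lemma cliques_setD1 e V v :
  #|cliques e V| <= #|cliques e (V :\ v)| + 2 ^ deg e V v.
Proof.
apply: leq_trans (leq_add (leqnn _) (card_pointed_sets_le v _)).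
apply: leq_trans (leq_card_setU _ _); apply: subset_leq_card; apply/subsetP=> A.
rewrite !inE => /andP[sAV /[dup] clA /cliqueP cA].
have [vA|vA] := boolP (v \in A); apply/orP; [right|left].
  apply/subsetP=> x; rewrite !inE => /andP[xv xA].
  by rewrite (subsetP sAV) // cA // eq_sym.
rewrite clA andbT; apply/subsetP=> x xA; rewrite !inE (subsetP sAV) // andbT.
by apply: contraNneq vA => <-.
Qed.

Lemma card_cliques_split e V w (S : {set T}) :
  #|cliques e V| <= #|[set A in cliques e V | w \notin A]| +
    #|[set A in cliques e V | (w \in A) && ~~ (A :\ w \subset S)]| + 2 ^ #|S|.
Proof.
apply: leq_trans (leq_add (leq_card_setU _ _) (card_pointed_sets_le w S)).
apply: leq_trans (leq_card_setU _ _); apply: subset_leq_card; apply/subsetP=> A.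
rewrite !inE => ->.
by case: (w \in A); case: (A :\ w \subset S).
Qed.

Lemma del_edge_simple e a b : simple_graph e -> simple_graph (del_edge e a b).
Proof.
move=> [sym irr]; split=> [x y|x]; last by rewrite /del_edge irr.
rewrite /del_edge sym; congr (_ && ~~ _).
by case: (x == a); case: (y == b); case: (x == b); case: (y == a).
Qed.

Lemma del_edge_subrel e a b : subrel (del_edge e a b) e.
Proof. by move=> x y /andP[]. Qed.

Lemma deg_del_edge e V a b x : simple_graph e -> a \in V -> b \in V -> e a b ->
  deg e V x = deg (del_edge e a b) V x + (x \in [set a; b]).
Proof.
move=> [sym irr] aV bV eab; have ab : a != b by apply: contraTneq eab => ->; rewrite irr.
rewrite /deg !inE /del_edge.
have [->|xa] := eqVneq x a; last have [->|xb] := eqVneq x b; last first.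
- rewrite addn0; apply: eq_card => y; rewrite !inE.
  by rewrite (negbTE xa) (negbTE xb) andbT.
- rewrite (cardsD1 a) inE aV sym eab addnC; congr (_ + _); apply: eq_card => y.
  by rewrite /nbhd !inE eqxx (eq_sym b a) (negbTE ab) /= andbC -andbA.
- rewrite (cardsD1 b) inE bV eab addnC; congr (_ + _); apply: eq_card => y.
  by rewrite /nbhd !inE eqxx (negbTE ab) /= orbF andbC -andbA.
Qed.

Lemma degsum_del_edge e V a b : simple_graph e -> a \in V -> b \in V -> e a b ->
  degsum e V = degsum (del_edge e a b) V + 2.
Proof.
move=> se aV bV eab; have [_ irr] := se.
have ab : a != b by apply: contraTneq eab => ->; rewrite irr.
rewrite /degsum (eq_bigr _ (fun x _ => deg_del_edge x se aV bV eab)) big_split /=.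
rewrite sum_mem_card (setIidPr _) ?cards2 ?ab //.
by apply/subsetP=> x; rewrite !inE => /orP[]/eqP->.
Qed.

Lemma subgraph_degsum_window e V k : simple_graph e -> k <= degsum e V ->
  exists e', [/\ simple_graph e', subrel e' e, k <= degsum e' V & degsum e' V <= k.+1].
Proof.
have [n] := ubnP (degsum e V); elim: n => // n IH in e *.
move=> lt_n se le_k; case: (leqP (degsum e V) k.+1) => [le_k1|gt_k1].
  by exists e; split.
have [a [b [aV bV eab]]] : exists a b, [/\ a \in V, b \in V & e a b].
  by apply: degsum_gt0; lia.
have dsum := degsum_del_edge se aV bV eab.
have [|||e' [se' sub' lo hi]] := IH (del_edge e a b); [lia | exact: del_edge_simple | lia |].
by exists e'; split=> // x y /sub'/del_edge_subrel.
Qed.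

Section Contraction.
Variables (e : rel T) (V : {set T}) (v w : T).
Hypotheses (sym : symmetric e) (evw : e v w) (wV : w \in V).

Lemma contract_simple : simple_graph (contract e v w).
Proof.
split=> [x y|x]; last by rewrite /contract eqxx.
rewrite /contract (eq_sym x y); congr (_ && _).
by rewrite (sym x y) (sym w y) (sym x w); congr (_ || _); apply: orbC.
Qed.

Definition uncontract B := if v \in B then w |: B else B.

Lemma subset_uncontract B : B \subset uncontract B.
Proof. by rewrite /uncontract; case: ifP => _; rewrite ?subsetUr. Qed.

Lemma mem_uncontract B x :
  (x \in uncontract B) = (x \in B) || (x == w) && (v \in B).
Proof. by rewrite /uncontract; case: ifP => _; rewrite ?inE ?andbT ?andbF ?orbF // orbC. Qed.

Lemma connected_in_uncontract B :
  connected_in (contract e v w) B -> connected_in e (uncontract B).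
Proof.
move=> /connected_inP conB; set B' := uncontract B.
pose R x y := [&& e x y, x \in B' & y \in B'].
have symR : connect_sym R.
  apply: sym_connect_sym => x y; rewrite /R sym.
  by case: (x \in B'); case: (y \in B'); rewrite ?andbF.
have edgeR x y : e x y -> x \in B' -> y \in B' -> connect R x y.
  by move=> exy xB' yB'; apply: connect1; rewrite /R exy xB' yB'.
have inB' x : x \in B -> x \in B' by apply: (subsetP (subset_uncontract B)).
have wB' : v \in B -> w \in B' by move=> vB; rewrite mem_uncontract eqxx vB orbT.
have step x y : contract e v w x y -> x \in B -> y \in B -> connect R x y.
  move=> /andP[_ /or3P[exy|/andP[/eqP xv ewy]|/andP[/eqP yv exw]]] xB yB.
  - by rewrite edgeR ?inB'.
  - rewrite xv in xB *; have wB := wB' xB.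
    exact: connect_trans (edgeR v w evw (inB' v xB) wB) (edgeR w y ewy wB (inB' y yB)).
  - rewrite yv in yB *; have wB := wB' yB.
    apply: connect_trans (edgeR x w exw (inB' x xB) wB) (edgeR w v _ wB (inB' v yB)).
    by rewrite sym.
have rep x : x \in B' -> exists2 x', x' \in B & connect R x x'.
  rewrite mem_uncontract => /orP[xB|/andP[/eqP-> vB]]; first by exists x.
  by exists v; rewrite // edgeR 1?sym ?wB' ?inB'.
apply/connected_inP=> x y /rep[x' x'B xx'] /rep[y' y'B yy'].
apply: connect_trans xx' _; rewrite symR in yy'; apply: connect_trans yy'.
by apply: connect_sub (conB x' y' x'B y'B) => a b /and3P[]; apply: step.
Qed.

Lemma has_K_minor_contract k :
  has_K_minor k (V :\ w) (contract e v w) -> has_K_minor k V e.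
Proof.
move=> [phi [ne sub con dis adj]].
have wphi i : w \notin phi i.
  by apply/negP=> /(subsetP (sub i)); rewrite !inE eqxx.
have inpsi i x : x \in phi i -> x \in uncontract (phi i).
  exact: (subsetP (subset_uncontract _)).
exists (fun i => uncontract (phi i)); split=> [i|i|i|i j ij|i j ij].
- by have /set0Pn[x xi] := ne i; apply/set0Pn; exists x; rewrite inpsi.
- apply/subsetP=> x; rewrite mem_uncontract => /orP[/(subsetP (sub i))|/andP[/eqP-> _]] //.
  by rewrite inE => /andP[].
- exact: connected_in_uncontract.
- have dij := dis i j ij; apply/pred0P=> x /=; apply/negbTE/negP.
  rewrite !mem_uncontract => /andP[/orP[xi|/andP[/eqP-> vi]] /orP[xj|/andP[/eqP xw vj]]].
  + by rewrite (disjointFl dij xj) in xi.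
  + by rewrite xw (negbTE (wphi i)) in xi.
  + by rewrite (negbTE (wphi j)) in xj.
  + by rewrite (disjointFl dij vj) in vi.
- have [x [y [xi yj]]] := adj i j ij.
  case/andP=> _ /or3P[exy|/andP[/eqP xv ewy]|/andP[/eqP yv exw]].
  + by exists x, y; rewrite !inpsi.
  + exists w, y; split=> //; last exact: inpsi.
    by rewrite mem_uncontract eqxx -xv xi orbT.
  + exists x, w; split=> //; first exact: inpsi.
    by rewrite mem_uncontract eqxx -yv yj orbT.
Qed.

Hypotheses (irr : irreflexive e) (vV : v \in V).

Lemma deg_contract_le x : x \in V :\ w :\ v ->
  deg e V x <= deg (contract e v w) (V :\ w) x + (x \in nbhd e V v :&: nbhd e V w).
Proof.
rewrite !inE => /and3P[xv xw xV]; rewrite /deg xV !(sym _ x) /=.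
set N := nbhd e V x; set N' := nbhd (contract e v w) (V :\ w) x.
have sN : N :\ w \subset N'.
  apply/subsetP=> y; rewrite !inE => /and3P[yw yV exy].
  by rewrite yw yV /contract exy /= andbT; apply: contraTneq exy => <-; rewrite irr.
rewrite (cardsD1 w N) inE wV /=.
case exw: (e x w); last by rewrite andbF addn0 subset_leq_card.
case exv: (e x v); first by rewrite addnC leq_add2r subset_leq_card.
rewrite addn0 add1n; apply: proper_card; apply/properP; split=> //; exists v.
  rewrite /N' !inE vV /contract xv eqxx exw /= ?orbT ?andbT.
  by apply: contraTneq evw => ->; rewrite irr.
by rewrite /N !inE exv !andbF.
Qed.

Lemma deg_contract_ends :
  deg e V v + deg e V w <= deg (contract e v w) (V :\ w) v + 2 + codeg e V v w.
Proof.
set A := nbhd e V v :\ w; set B := nbhd e V w :\ v.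
have dA : deg e V v = #|A| + 1.
  by rewrite /deg (cardsD1 w) inE wV evw addnC.
have dB : deg e V w = #|B| + 1.
  by rewrite /deg (cardsD1 v) inE vV sym evw addnC.
have sAB : A :|: B \subset nbhd (contract e v w) (V :\ w) v.
  apply/subsetP=> y; rewrite !inE /contract eqxx /=.
  case/orP=> [/and3P[yw yV evy]|/and3P[yv yV ewy]]; rewrite yV andbT.
    by rewrite yw evy /= andbT; apply: contraTneq evy => <-; rewrite irr.
  by rewrite (eq_sym v y) yv ewy /= orbT andbT; apply: contraTneq ewy => ->; rewrite irr.
have sAB' : A :&: B \subset nbhd e V v :&: nbhd e V w.
  by apply: setISS; apply: subsetDl.
have := cardsUI A B; have := subset_leq_card sAB; have := subset_leq_card sAB'.
rewrite /codeg dA dB /deg; lia.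
Qed.

Lemma degsum_contract :
  degsum e V <= degsum (contract e v w) (V :\ w) + 2 + 2 * codeg e V v w.
Proof.
have vw : v != w by apply: contraTneq evw => ->; rewrite irr.
have vVw : v \in V :\ w by rewrite !inE vw vV.
have wVv : w \in V :\ v by rewrite !inE eq_sym vw wV.
rewrite /degsum (big_setD1 v vV) (big_setD1 w wVv) (big_setD1 v vVw) /=.
have -> : V :\ v :\ w = V :\ w :\ v by apply/setP=> y; rewrite !inE andbCA.
have rest : \sum_(x in V :\ w :\ v) deg e V x <=
            (\sum_(x in V :\ w :\ v) deg (contract e v w) (V :\ w) x) + codeg e V v w.
  apply: (leq_trans (leq_sum _ deg_contract_le)).
  by rewrite big_split /= sum_mem_card leq_add2l subset_leq_card ?subsetIr.
have := deg_contract_ends; lia.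
Qed.

Lemma clique_contract A : is_clique e A -> is_clique (contract e v w) A.
Proof.
move/cliqueP=> cA; apply/cliqueP=> x y xA yA xy.
by rewrite /contract xy (cA x y).
Qed.

Lemma clique_contract_lift A : is_clique e A -> w \in A -> v \notin A ->
  is_clique (contract e v w) (v |: A :\ w).
Proof.
move=> /cliqueP cA wA vA; have [csym _] := contract_simple.
have vy y : y \in A :\ w -> contract e v w v y.
  rewrite !inE => /andP[yw yA]; rewrite /contract eqxx (cA w y) 1?eq_sym //= orbT andbT.
  by apply: contraNneq vA => <-.
apply/cliqueP=> x y; rewrite !in_setU1 => /orP[/eqP->|xA] /orP[/eqP->|yA] xy.
- by rewrite eqxx in xy.
- exact: vy.
- by rewrite csym; apply: vy.
- by move: xA yA; rewrite !inE => /andP[_ xA] /andP[_ yA]; rewrite /contract xy cA.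
Qed.

Lemma clique_off_common_nbhd A : A \subset V -> is_clique e A -> w \in A ->
  ~~ (A :\ w \subset v |: (nbhd e V v :&: nbhd e V w)) ->
  v \notin A /\ exists2 c, c \in A & ~~ e v c.
Proof.
move=> sAV /cliqueP cA wA /subsetPn[c]; rewrite !inE => /andP[cw cA'] notS.
have cv : c != v by apply: contraNneq notS => ->; rewrite eqxx.
have evc : ~~ e v c.
  apply: contraNN notS => evc; rewrite (subsetP sAV) // evc (cA w c) 1?eq_sym //.
  by rewrite orbT.
split; last by exists c.
by apply: contraNN evc => vA; rewrite cA // eq_sym.
Qed.

Lemma card_cliques_contract_ge :
  #|[set A in cliques e V | w \notin A]| +
  #|[set A in cliques e V | (w \in A) &&
                            ~~ (A :\ w \subset v |: (nbhd e V v :&: nbhd e V w))]|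
  <= #|cliques (contract e v w) (V :\ w)|.
Proof.
set K0 := [set A in _ | _]; set K1 := [set A in _ | _]; pose lift A := v |: A :\ w.
have K1P A : A \in K1 ->
    [/\ A \subset V, is_clique e A, w \in A & v \notin A /\ exists2 c, c \in A & ~~ e v c].
  rewrite !inE => /andP[/andP[sAV clA] /andP[wA nS]]; split=> //.
  exact: clique_off_common_nbhd.
have vDw (X : {set T}) : v \notin X -> v \notin X :\ w.
  by move=> vX; rewrite !inE negb_and vX orbT.
have injL : {in K1 &, injective lift}.
  move=> A B /K1P[_ _ wA [vA _]] /K1P[_ _ wB [vB _]] eqAB.
  by rewrite -(setD1K wA) -(setU1K (vDw _ vA)) -/(lift A) eqAB /lift setU1K ?vDw // setD1K.
have sub0 : K0 \subset cliques (contract e v w) (V :\ w).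
  apply/subsetP=> A; rewrite !inE => /andP[/andP[sAV clA] wA].
  rewrite clique_contract // andbT; apply/subsetP=> x xA.
  by rewrite !inE (subsetP sAV) // andbT; apply: contraNneq wA => <-.
have sub1 : lift @: K1 \subset cliques (contract e v w) (V :\ w).
  apply/subsetP=> _ /imsetP[A /K1P[sAV clA wA [vA _]] ->].
  rewrite inE clique_contract_lift // andbT subUset sub1set setSD // !inE vV !andbT.
  by apply: contraTneq evw => ->; rewrite irr.
have dis : K0 :&: lift @: K1 = set0.
  apply/setP=> B; rewrite inE [RHS]inE; apply/negbTE/andP=> -[].
  rewrite !inE => /andP[/andP[_ /cliqueP cB] _] /imsetP[A /K1P[_ _ _ [vA [c cA nevc]]] eB].
  have cw : c != w by apply: contraNneq nevc => ->.
  have vc : v != c by apply: contraNneq vA => ->.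
  by case/negP: nevc; apply: cB; rewrite // eB !inE ?eqxx // cw cA orbT.
have := cardsUI K0 (lift @: K1); rewrite dis cards0 addn0 card_in_imset // => <-.
by apply: subset_leq_card; rewrite subUset sub0 sub1.
Qed.

Lemma cliques_contract : codeg e V v w <= 2 ->
  #|cliques e V| <= #|cliques (contract e v w) (V :\ w)| + 8.
Proof.
move=> small; have := card_cliques_split e V w (v |: (nbhd e V v :&: nbhd e V w)).
have le8 : 2 ^ #|v |: (nbhd e V v :&: nbhd e V w)| <= 8.
  rewrite (_ : 8 = 2 ^ 3) // leq_exp2l // cardsU1; move: small; rewrite /codeg; lia.
have := card_cliques_contract_ge; lia.
Qed.

End Contraction.

Lemma degsum_bound_contract e V v w k b : simple_graph e -> v \in V -> w \in V ->
  e v w -> 2 * (codeg e V v w).+1 <= k ->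
  degsum (contract e v w) (V :\ w) + b <= k * #|V :\ w| ->
  degsum e V + b <= k * #|V|.
Proof.
move=> [sym irr] vV wV evw small bound_contract.
have := degsum_contract sym evw wV irr vV.
rewrite (cardsD1 w V) wV mulnDr muln1; lia.
Qed.

Lemma K3_free_degsum e V : simple_graph e -> 0 < #|V| ->
  ~ has_K_minor 3 V e -> degsum e V + 2 <= 2 * #|V|.
Proof.
have [n] := ubnP #|V|; elim: n => // n IH in e V *.
move=> ltVn se V0 noK3; have [sym irr] := se.
have [->|/degsum_gt0[v [w [vV wV evw]]]] := posnP (degsum e V); first lia.
have [C0|C0] := posnP (codeg e V v w); last first.
  by case: noK3; apply: has_K3_minor_triangle se vV wV evw C0.
apply: (degsum_bound_contract se vV wV evw); first by rewrite C0.
apply: IH.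
- by move: ltVn; rewrite (cardsD1 w V) wV.
- exact: contract_simple.
- apply/card_gt0P; exists v; rewrite !inE vV andbT.
  by apply: contraTneq evw => ->; rewrite irr.
- by move/(has_K_minor_contract sym evw wV).
Qed.

Lemma K4_free_degsum e V : simple_graph e -> 1 < #|V| ->
  ~ has_K_minor 4 V e -> degsum e V + 6 <= 4 * #|V|.
Proof.
have [n] := ubnP #|V|; elim: n => // n IH in e V *.
move=> ltVn se V1 noK4; have [sym irr] := se.
have [->|/degsum_gt0[v [w [vV wV evw]]]] := posnP (degsum e V); first lia.
have [V2|V3] := leqP #|V| 2.
  have VE : #|V| = 2 by lia.
  by have := degsum_le V irr; rewrite VE; lia.
have noK3 : ~ has_K_minor 3 (nbhd e V v) e by move/(has_K_minor_cone se vV).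
have H0 : 0 < #|nbhd e V v| by apply/card_gt0P; exists w; rewrite inE wV.
have [u uH du] : exists2 u, u \in nbhd e V v & deg e (nbhd e V v) u < 2.
  by apply: exists_deg_lt; have := K3_free_degsum se H0 noK3; lia.
move: (uH); rewrite inE => /andP[uV evu].
apply: (degsum_bound_contract se vV uV evu); first by move: du; rewrite deg_nbhd; lia.
apply: IH.
- by move: ltVn; rewrite (cardsD1 u V) uV.
- exact: contract_simple.
- by move: V3; rewrite (cardsD1 u V) uV.
- by move/(has_K_minor_contract sym evu uV).
Qed.

Lemma K5_free_small_codeg e V v : simple_graph e -> v \in V ->
  ~ has_K_minor 5 V e -> 0 < deg e V v < 6 ->
  exists2 w, w \in nbhd e V v & codeg e V v w <= 2.
Proof.
move=> se vV noK5 /andP[/card_gt0P[w wH] d6]; have [_ irr] := se.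
have noK4 : ~ has_K_minor 4 (nbhd e V v) e by move/(has_K_minor_cone se vV).
have [/exists_inP //|/exists_inPn big] :=
  boolP [exists w in nbhd e V v, codeg e V v w <= 2].
have big' u : u \in nbhd e V v -> 3 <= deg e (nbhd e V v) u.
  by move=> /big; rewrite deg_nbhd ltnNge.
have H1 : 1 < #|nbhd e V v| by have := deg_lt_card irr wH; have := big' w wH; lia.
have := K4_free_degsum se H1 noK4; have := degsum_ge big'; move: d6; rewrite /deg; lia.
Qed.

Lemma K5_free_degsum e V : simple_graph e -> 2 < #|V| ->
  ~ has_K_minor 5 V e -> degsum e V + 12 <= 6 * #|V|.
Proof.
have [n] := ubnP #|V|; elim: n => // n IH in e V *.
move=> ltVn se V2 noK5; have [_ irr] := se.
have [V3|V4] := leqP #|V| 3.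
  have VE : #|V| = 3 by lia.
  by have := degsum_le V irr; rewrite VE; lia.
rewrite leqNgt; apply/negP => big.
(* Delete edges down to exactly 3|V| - 5. Then a vertex v of degree at most 5 is
   not isolated, and contracting an edge vw in at most two triangles loses at most
   three edges, contradicting the bound 3|V| - 9 on |V| - 1 vertices. *)
have [|f [sf fe lo hi]] := subgraph_degsum_window (V := V) (k := 6 * #|V| - 11) se; first lia.
have noK5f : ~ has_K_minor 5 V f by move/(has_K_minor_subrel fe).
have [v vV dv] : exists2 v, v \in V & deg f V v < 6 by apply: exists_deg_lt; lia.
have Vv := cardsD1 v V; rewrite vV in Vv.
have delv : degsum f (V :\ v) + 12 <= 6 * #|V :\ v|.
  by apply: IH => //; [lia | lia | move/(has_K_minor_subset (subsetDl V [set v]))].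
have [w wH small] : exists2 w, w \in nbhd f V v & codeg f V v w <= 2.
  by apply: K5_free_small_codeg => //; rewrite dv andbT; have := degsum_setD1 sf vV; lia.
move: wH; rewrite inE => /andP[wV evw]; have [fsym _] := sf.
have Vw := cardsD1 w V; rewrite wV in Vw.
suff : degsum f V + 12 <= 6 * #|V| by lia.
apply: (degsum_bound_contract sf vV wV evw); first lia.
apply: IH; [lia | exact: contract_simple | lia | by move/(has_K_minor_contract fsym evw wV)].
Qed.

Lemma K5_free_cliques e V : simple_graph e -> 2 < #|V| ->
  ~ has_K_minor 5 V e -> #|cliques e V| <= 8 * (#|V| - 2).
Proof.
have [n] := ubnP #|V|; elim: n => // n IH in e V *.
move=> ltVn se V2 noK5; have [sym irr] := se.
have [V3|V4] := leqP #|V| 3.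
  have VE : #|V| = 3 by lia.
  by have := card_cliques_le e V; rewrite VE.
have [v vV dv] : exists2 v, v \in V & deg e V v < 6.
  by apply: exists_deg_lt; have := K5_free_degsum se V2 noK5; lia.
have [d0|d0] := posnP (deg e V v).
  have Vv := cardsD1 v V; rewrite vV in Vv.
  have := cliques_setD1 e V v; rewrite d0.
  suff : #|cliques e (V :\ v)| <= 8 * (#|V :\ v| - 2) by lia.
  by apply: IH => //; [lia | lia | move/(has_K_minor_subset (subsetDl V [set v]))].
have [w wH small] : exists2 w, w \in nbhd e V v & codeg e V v w <= 2.
  by apply: K5_free_small_codeg; rewrite ?d0.
move: wH; rewrite inE => /andP[wV evw].
have Vw := cardsD1 w V; rewrite wV in Vw.
have := cliques_contract sym evw wV irr vV small.
suff : #|cliques (contract e v w) (V :\ w)| <= 8 * (#|V :\ w| - 2) by lia.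
apply: IH; [lia | exact: contract_simple | lia | by move/(has_K_minor_contract sym evw wV)].
Qed.

End Graphs.

Theorem theorem6 (T : finType) (e : rel T) :
  simple_graph e -> 3 <= #|T| -> ~ has_K5_minor e ->
  num_cliques e <= 8 * (#|T| - 2).
Proof.
move=> se T3 noK5.
have -> : num_cliques e = #|cliques e [set: T]|.
  by apply: eq_card => A; rewrite !inE subsetT.
rewrite -cardsT; apply: K5_free_cliques; rewrite ?cardsT //.
by case=> phi [ne _ con dis adj]; apply: noK5; exists phi.
Qed.
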